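(* Let $G$ be a graph with maximum degree at most $\Delta_{\max}$, let $t\in\mathbb{N}$, let $\eta\geq 0$, and let $c:E(G)\to[t]$ be a (not necessarily proper) edge-colouring such that for every edge $uv\in E(G)$ and every $i\in[t]$, $$s_{c(uv)}(u)+s_{c(uv)}(v)\leq \eta+s_i(u)+s_i(v).$$ If $uv\in E(G)$ satisfies $s_{c(uv)}(u)+s_{c(uv)}(v)=D$, then there exists a colour $\kappa\in[t]$ such that $s_\kappa(u)\geq D-\eta$.
   Context: For a vertex $v$ and colour $i\in[t]$, $d_i(v)$ is the number of edges of colour $i$ incident to $v$, and $s_i(v)=\max\{d_i(v)-\frac{\Delta_{\max}}{t},0\}$. *)

From mathcomp Require Import all_boot all_order all_algebra.
Set Implicit Arguments. Unset Strict Implicit. Unset Printing Implicit Defensive.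
Import Order.TTheory GRing.Theory Num.Theory.
Local Open Scope ring_scope.

Definition simple_graph (T : finType) (e : rel T) : Prop :=
  symmetric e /\ irreflexive e.

Definition deg (T : finType) (e : rel T) (v : T) : nat := #|[set w | e v w]|.

(* An edge-colouring c : E(G) -> [t] is given as a function on ordered pairs,
   required to be symmetric on edges (so it is a function of the edge uv). *)
Definition edge_colouring (T : finType) (e : rel T) (t : nat)
  (c : T -> T -> 'I_t) : Prop :=
  forall u v, e u v -> c u v = c v u.

Definition cdeg (T : finType) (e : rel T) (t : nat) (c : T -> T -> 'I_t)
  (i : 'I_t) (v : T) : nat := #|[set w | e v w && (c v w == i)]|.

Definition surplus (R : realFieldType) (T : finType) (e : rel T) (t : nat)
  (c : T -> T -> 'I_t) (Dmax : R) (i : 'I_t) (v : T) : R :=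
  Num.max ((cdeg e c i v)%:R - Dmax / t%:R) 0.

From mathcomp Require Import all_boot all_order all_algebra.
Set Implicit Arguments. Unset Strict Implicit. Unset Printing Implicit Defensive.
Import Order.TTheory GRing.Theory Num.Theory.
Local Open Scope ring_scope.

(* Since the colour degrees of v add up to deg v <= Dmax, some colour kappa has
   d_kappa(v) <= Dmax / t, i.e. s_kappa(v) = 0.  The balancing hypothesis at the
   edge uv with i = kappa then reads D <= eta + s_kappa(u). *)

Lemma sum_cdeg (T : finType) (e : rel T) (t : nat) (c : T -> T -> 'I_t) (v : T) :
  (\sum_(i < t) cdeg e c i v)%N = deg e v.
Proof.
rewrite /deg /cdeg -sum1_card (partition_big (c v) xpredT) //=.
by apply: eq_bigr => i _; rewrite -sum1_card; apply: eq_bigl => w; rewrite !inE.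
Qed.

Lemma exists_le_mean (R : realFieldType) (t : nat) (F : 'I_t -> R) (M : R) :
  (0 < t)%N -> \sum_(i < t) F i <= M -> exists i : 'I_t, F i <= M / t%:R.
Proof.
move=> t_gt0 sumFM; apply/existsP; apply: contraLR sumFM => /existsPn F_gt.
have t_neq0 : t%:R != 0 :> R by rewrite pnatr_eq0 -lt0n.
rewrite -ltNge -[M](divfK t_neq0) mulr_natr.
have -> : M / t%:R *+ t = \sum_(i < t) (M / t%:R) by rewrite sumr_const card_ord.
apply: ltr_sum => [|i _]; last by rewrite ltNge F_gt.
by apply/hasP; exists (Ordinal t_gt0); rewrite ?mem_index_enum.
Qed.

Lemma surplus_eq0 (R : realFieldType) (T : finType) (e : rel T) (t : nat)
    (c : T -> T -> 'I_t) (Dmax : R) (i : 'I_t) (v : T) :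
  (cdeg e c i v)%:R <= Dmax / t%:R -> surplus e c Dmax i v = 0.
Proof. by move=> le_cdeg; apply/max_idPr; rewrite subr_le0. Qed.

Lemma exists_surplus_eq0 (R : realFieldType) (T : finType) (e : rel T) (t : nat)
    (c : T -> T -> 'I_t) (Dmax : R) (v : T) :
  (0 < t)%N -> (deg e v)%:R <= Dmax ->
  exists i : 'I_t, surplus e c Dmax i v = 0.
Proof.
move=> t_gt0 deg_le.
have sum_le : \sum_(i < t) ((cdeg e c i v)%:R : R) <= Dmax.
  by rewrite -natr_sum sum_cdeg.
have [i le_cdeg] := exists_le_mean t_gt0 sum_le.
by exists i; apply: surplus_eq0.
Qed.

Theorem lemma4p3 (R : realFieldType) (T : finType) (e : rel T) (Dmax : R)
  (t : nat) (eta : R) (c : T -> T -> 'I_t) :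
  simple_graph e ->
  (forall v, (deg e v)%:R <= Dmax) ->
  0 <= eta ->
  edge_colouring e c ->
  (forall u v (i : 'I_t), e u v ->
     surplus e c Dmax (c u v) u + surplus e c Dmax (c u v) v
       <= eta + surplus e c Dmax i u + surplus e c Dmax i v) ->
  forall (u v : T) (D : R), e u v ->
  surplus e c Dmax (c u v) u + surplus e c Dmax (c u v) v = D ->
  exists kappa : 'I_t, D - eta <= surplus e c Dmax kappa u.
Proof.
move=> _ deg_le _ _ balanced u v D euv <-.
have t_gt0 : (0 < t)%N by apply: leq_ltn_trans (ltn_ord (c u v)).
have [kappa s_v0] := exists_surplus_eq0 c t_gt0 (deg_le v).
exists kappa; rewrite lerBlDl.
by have := balanced u v kappa euv; rewrite s_v0 addr0.
Qed.
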